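(* Assume $0<A,B\le1$ and $B\ge B_0(A)$, and let $U$ satisfy $G_{A,B}(U)=0$ and $L(A,B)\le U\le R(A,B)$. Then \[ (A+B)(1-U)+B\kappa M(U)+A\varepsilon N(U)\ge\tfrac12\sqrt{2(1+AB)} \] and \[ (A+B)U+B\kappa M(U)+A\varepsilon N(U)\ge\tfrac12\sqrt{2(1+AB)} . \]
   Context: For $0<A,B\le1$ put $\kappa=\sqrt{1-A^2}$, $\varepsilon=\sqrt{1-B^2}$, $P=P(A,B)=\frac{1+AB}{B(A+B)}$, $M(U)=\kappa(P-U)$, $N(U)=\varepsilon\left(U+\frac{\kappa^2}{A(A+B)}\right)$, and $G_{A,B}(U)=B\cos(\pi M(U))-A\cos(\pi N(U))-(A+B)\cos(\pi U)$. Further $L(A,B)=\frac{\kappa}{1+\kappa}\frac{1+AB}{B(A+B)}$, $R(A,B)=\frac{1-\varepsilon\kappa^2/[A(A+B)]}{1+\varepsilon}$, and $B_0(A)=\frac{-A(1-\kappa)+\sqrt{A^2(1-\kappa)^2+8\kappa(1+\kappa)}}{2(1+\kappa)}$. *)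

From Stdlib Require Import Reals Lra.
Open Scope R_scope.

Definition kap (A : R) : R := sqrt (1 - A^2).
Definition eps (B : R) : R := sqrt (1 - B^2).
Definition Pf (A B : R) : R := (1 + A*B) / (B * (A + B)).
Definition Mf (A B U : R) : R := kap A * (Pf A B - U).
Definition Nf (A B U : R) : R := eps B * (U + (kap A)^2 / (A * (A + B))).
Definition G (A B U : R) : R :=
  B * cos (PI * Mf A B U) - A * cos (PI * Nf A B U) - (A + B) * cos (PI * U).
Definition Lf (A B : R) : R :=
  kap A / (1 + kap A) * ((1 + A*B) / (B * (A + B))).
Definition Rf (A B : R) : R :=
  (1 - eps B * (kap A)^2 / (A * (A + B))) / (1 + eps B).
Definition B0 (A : R) : R :=
  (- A * (1 - kap A) + sqrt (A^2 * (1 - kap A)^2 + 8 * kap A * (1 + kap A)))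
  / (2 * (1 + kap A)).

From Stdlib Require Import Reals Lra Psatz ZArith List.
Open Scope R_scope.

(* With [v = U - 1/2], the two left-hand sides are [(3 + AB)/4 + excess/(4(A+B))] minus,
   resp. plus, a positive multiple of [v], and [(3 + AB)/4 >= sqrt(2(1+AB))/2] by AM-GM.
   As [excess >= 0], it suffices to show [slope A B * v <= excess/(4(A+B))] for [v >= 0];
   the case [v <= 0] is the same with [A] and [B] swapped.  The equation [G(U) = 0] reads
   [(A+B) sin(pi v) = A cos(pi N) - B cos(pi M)]; as [N] increases and [M] decreases with
   [v], the right side is at most its value at [v = 0], which Taylor polynomials bound by
   [min A cos_upper].  Were [v > vmax = excess/(4(A+B) slope)], the left side would exceed
   [sin_lower], the cubic lower bound for [sin] at [pi vmax].  That [sin_lower] dominates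
   [min A cos_upper] is a two-variable inequality, checked on the unit square by bisection
   with verified dyadic interval arithmetic.  The hypothesis [B >= B0 A] is exactly what
   gives [Mmid A B <= 1/2], where [Mmid] is the value of [M] at [U = 1/2]. *)

(** * Dyadic interval arithmetic *)

Definition scale : Z := 2 ^ 20.

Definition dy (m : Z) : R := IZR m / IZR scale.

(* [sq_dy p] reads [p] at the squared scale, which is where products of two dyadics live. *)
Definition sq_dy (p : Z) : R := IZR p / (IZR scale * IZR scale).

Definition rdown (p : Z) : Z := p / scale.
Definition rup (p : Z) : Z := - (- p / scale).

Lemma scale_pos : (0 < scale)%Z.
Proof. reflexivity. Qed.

Lemma IZR_scale_pos : 0 < IZR scale.
Proof. exact (IZR_lt _ _ scale_pos). Qed.

Lemma dy_0 : dy 0 = 0.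
Proof. unfold dy; simpl; field; generalize IZR_scale_pos; lra. Qed.

Lemma dy_add m n : dy (m + n) = dy m + dy n.
Proof. unfold dy; rewrite plus_IZR; field; generalize IZR_scale_pos; lra. Qed.

Lemma dy_sub m n : dy (m - n) = dy m - dy n.
Proof. unfold dy; rewrite minus_IZR; field; generalize IZR_scale_pos; lra. Qed.

Lemma dy_mul m n : dy m * dy n = sq_dy (m * n).
Proof. unfold dy, sq_dy; rewrite mult_IZR; field; generalize IZR_scale_pos; lra. Qed.

Lemma dy_const z : dy (z * scale) = IZR z.
Proof. unfold dy; rewrite mult_IZR; field; generalize IZR_scale_pos; lra. Qed.

Lemma dy_le m n : (m <= n)%Z -> dy m <= dy n.
Proof.
  intros H; apply IZR_le in H; unfold dy.
  apply Rmult_le_compat_r; [left; apply Rinv_0_lt_compat, IZR_scale_pos | exact H].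
Qed.

Lemma dy_lt m n : (m < n)%Z -> dy m < dy n.
Proof.
  intros H; apply IZR_lt in H; unfold dy.
  apply Rmult_lt_compat_r; [apply Rinv_0_lt_compat, IZR_scale_pos | exact H].
Qed.

Lemma sq_dy_le p q : (p <= q)%Z -> sq_dy p <= sq_dy q.
Proof.
  intros H; apply IZR_le in H; unfold sq_dy.
  apply Rmult_le_compat_r; [|exact H].
  left; apply Rinv_0_lt_compat; generalize IZR_scale_pos; nra.
Qed.

Lemma dy_rdown p : dy (rdown p) <= sq_dy p.
Proof.
  pose proof (Z.mul_div_le p scale scale_pos) as H; apply IZR_le in H.
  rewrite mult_IZR in H; unfold dy, sq_dy, rdown; pose proof IZR_scale_pos as S.
  replace (IZR (p / scale) / IZR scale)
    with (IZR scale * IZR (p / scale) / (IZR scale * IZR scale)) by (field; lra).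
  apply Rmult_le_compat_r; [left; apply Rinv_0_lt_compat; nra | exact H].
Qed.

Lemma dy_rup p : sq_dy p <= dy (rup p).
Proof.
  pose proof (dy_rdown (- p)) as H; unfold dy, sq_dy, rdown, rup in *.
  rewrite !opp_IZR in *; unfold Rdiv in *; lra.
Qed.

Lemma min4_sq_dy_le p1 p2 p3 p4 t :
  sq_dy p1 <= t \/ sq_dy p2 <= t \/ sq_dy p3 <= t \/ sq_dy p4 <= t ->
  sq_dy (Z.min (Z.min p1 p2) (Z.min p3 p4)) <= t.
Proof.
  intros H; destruct H as [H|[H|[H|H]]]; eapply Rle_trans; try exact H; apply sq_dy_le; lia.
Qed.

Lemma max4_sq_dy_ge p1 p2 p3 p4 t :
  t <= sq_dy p1 \/ t <= sq_dy p2 \/ t <= sq_dy p3 \/ t <= sq_dy p4 ->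
  t <= sq_dy (Z.max (Z.max p1 p2) (Z.max p3 p4)).
Proof.
  intros H; destruct H as [H|[H|[H|H]]]; (eapply Rle_trans; [exact H|]); apply sq_dy_le; lia.
Qed.

Lemma mul_ge_corner x y a b c d : a <= x <= b -> c <= y <= d ->
  a * c <= x * y \/ a * d <= x * y \/ b * c <= x * y \/ b * d <= x * y.
Proof.
  intros [] [].
  destruct (Rle_dec 0 x), (Rle_dec 0 c), (Rle_dec 0 d).
  all: first [left; nra | right; left; nra | right; right; left; nra | right; right; right; nra].
Qed.

Lemma mul_le_corner x y a b c d : a <= x <= b -> c <= y <= d ->
  x * y <= a * c \/ x * y <= a * d \/ x * y <= b * c \/ x * y <= b * d.
Proof.
  intros [] [].
  destruct (Rle_dec 0 x), (Rle_dec 0 c), (Rle_dec 0 d).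
  all: first [left; nra | right; left; nra | right; right; left; nra | right; right; right; nra].
Qed.

Definition itv : Type := Z * Z.

Definition in_itv (x : R) (i : itv) : Prop := dy (fst i) <= x <= dy (snd i).

Definition iadd (i j : itv) : itv := (fst i + fst j, snd i + snd j)%Z.

Definition isub (i j : itv) : itv := (fst i - snd j, snd i - fst j)%Z.

Definition imul (i j : itv) : itv :=
  let '(a, b) := i in let '(c, d) := j in
  (rdown (Z.min (Z.min (a * c) (a * d)) (Z.min (b * c) (b * d))),
   rup (Z.max (Z.max (a * c) (a * d)) (Z.max (b * c) (b * d))))%Z.

Definition isq (i : itv) : itv :=
  let '(a, b) := i in
  if (0 <=? a)%Z then (rdown (a * a), rup (b * b))%Z
  else if (b <=? 0)%Z then (rdown (b * b), rup (a * a))%Z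
  else (0, rup (Z.max (a * a) (b * b)))%Z.

Definition iinv (i : itv) : option itv :=
  let '(c, d) := i in
  if (0 <? c)%Z then Some (scale * scale / d, - (- (scale * scale) / c))%Z else None.

Lemma iadd_correct x y i j : in_itv x i -> in_itv y j -> in_itv (x + y) (iadd i j).
Proof. unfold in_itv, iadd; simpl; rewrite !dy_add; lra. Qed.

Lemma isub_correct x y i j : in_itv x i -> in_itv y j -> in_itv (x - y) (isub i j).
Proof. unfold in_itv, isub; simpl; rewrite !dy_sub; lra. Qed.

Lemma imul_correct x y i j : in_itv x i -> in_itv y j -> in_itv (x * y) (imul i j).
Proof.
  destruct i as [a b], j as [c d]; unfold in_itv, imul; simpl; intros Hx Hy; split.
  - eapply Rle_trans; [apply dy_rdown|]; apply min4_sq_dy_le.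
    rewrite <- !dy_mul; exact (mul_ge_corner _ _ _ _ _ _ Hx Hy).
  - eapply Rle_trans; [|apply dy_rup]; apply max4_sq_dy_ge.
    rewrite <- !dy_mul; exact (mul_le_corner _ _ _ _ _ _ Hx Hy).
Qed.

Lemma isq_correct x i : in_itv x i -> in_itv (x ^ 2) (isq i).
Proof.
  destruct i as [a b]; unfold in_itv, isq; simpl; intros [Ha Hb].
  pose proof dy_rdown as Hr; pose proof dy_rup as Hu.
  destruct (0 <=? a)%Z eqn:Ea; [|destruct (b <=? 0)%Z eqn:Eb]; simpl.
  - apply Z.leb_le, dy_le in Ea; rewrite dy_0 in Ea.
    pose proof (Hr (a * a)%Z); pose proof (Hu (b * b)%Z); rewrite <- !dy_mul in *; split; nra.
  - apply Z.leb_le, dy_le in Eb; rewrite dy_0 in Eb.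
    pose proof (Hr (b * b)%Z); pose proof (Hu (a * a)%Z); rewrite <- !dy_mul in *; split; nra.
  - rewrite dy_0; split; [nra|].
    eapply Rle_trans; [|apply dy_rup].
    pose proof (sq_dy_le (a * a) (Z.max (a * a) (b * b)) ltac:(lia)).
    pose proof (sq_dy_le (b * b) (Z.max (a * a) (b * b)) ltac:(lia)).
    rewrite <- !dy_mul in *; destruct (Rle_dec 0 x); nra.
Qed.

Lemma dy_div_le_inv d : (0 < d)%Z -> dy (scale * scale / d) <= / dy d.
Proof.
  intros Hd; pose proof (Z.mul_div_le (scale * scale) d Hd) as H.
  apply IZR_lt in Hd; apply IZR_le in H; rewrite !mult_IZR in H.
  pose proof IZR_scale_pos as S; unfold dy.
  replace (/ (IZR d / IZR scale)) with (IZR scale * IZR scale / (IZR d * IZR scale)) by (field; lra).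
  replace (IZR (scale * scale / d) / IZR scale)
    with (IZR d * IZR (scale * scale / d) / (IZR d * IZR scale)) by (field; lra).
  apply Rmult_le_compat_r; [left; apply Rinv_0_lt_compat; nra | exact H].
Qed.

Lemma inv_le_dy_div c : (0 < c)%Z -> / dy c <= dy (- (- (scale * scale) / c)).
Proof.
  intros Hc; pose proof (Z.mul_div_le (- (scale * scale)) c Hc) as H.
  apply IZR_lt in Hc; apply IZR_le in H; rewrite !mult_IZR, !opp_IZR, !mult_IZR in H.
  pose proof IZR_scale_pos as S; unfold dy; rewrite opp_IZR.
  set (q := IZR (- (scale * scale) / c)) in *.
  replace (/ (IZR c / IZR scale)) with (IZR scale * IZR scale / (IZR c * IZR scale)) by (field; lra).
  replace (- q / IZR scale) with (IZR c * - q / (IZR c * IZR scale)) by (field; lra).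
  apply Rmult_le_compat_r; [left; apply Rinv_0_lt_compat; nra | lra].
Qed.

Lemma iinv_correct y i k : in_itv y i -> iinv i = Some k -> 0 < y /\ in_itv (/ y) k.
Proof.
  destruct i as [c d]; unfold iinv, in_itv; cbv beta iota; cbn [fst snd]; intros [Hc Hd].
  destruct (0 <? c)%Z eqn:Ec; [|discriminate]; intros E; injection E as <-.
  apply Z.ltb_lt in Ec.
  assert (Hc0 : 0 < dy c) by (rewrite <- dy_0; apply dy_lt; exact Ec).
  assert (Hd0 : (0 < d)%Z) by (apply Z.nle_gt; intros Hd'; apply dy_le in Hd'; rewrite dy_0 in Hd'; lra).
  split; [lra | cbn [fst snd]; split].
  - eapply Rle_trans; [apply dy_div_le_inv, Hd0|]; apply Rinv_le_contravar; lra.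
  - eapply Rle_trans; [|apply inv_le_dy_div, Ec]; apply Rinv_le_contravar; lra.
Qed.

(** * Certified sign conditions on the unit square *)

Inductive rexpr : Type :=
| XA | XB | XPi | XConst (z : Z)
| XAdd (x y : rexpr) | XSub (x y : rexpr) | XMul (x y : rexpr) | XDiv (x y : rexpr)
| XSq (x : rexpr).

Fixpoint reval (A B : R) (e : rexpr) : R :=
  match e with
  | XA => A
  | XB => B
  | XPi => PI
  | XConst z => IZR z
  | XAdd x y => reval A B x + reval A B y
  | XSub x y => reval A B x - reval A B y
  | XMul x y => reval A B x * reval A B y
  | XDiv x y => reval A B x / reval A B y
  | XSq x => reval A B x ^ 2
  end.

(* 3.14 and 3.15, at scale 2^20. *)
Definition pi_itv : itv := (3292528, 3303015)%Z.

Definition omap2 (f : itv -> itv -> itv) (oi oj : option itv) : option itv :=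
  match oi, oj with Some i, Some j => Some (f i j) | _, _ => None end.

Fixpoint ieval (iA iB : itv) (e : rexpr) : option itv :=
  match e with
  | XA => Some iA
  | XB => Some iB
  | XPi => Some pi_itv
  | XConst z => Some (z * scale, z * scale)%Z
  | XAdd x y => omap2 iadd (ieval iA iB x) (ieval iA iB y)
  | XSub x y => omap2 isub (ieval iA iB x) (ieval iA iB y)
  | XMul x y => omap2 imul (ieval iA iB x) (ieval iA iB y)
  | XDiv x y =>
      match ieval iA iB y with
      | Some j => omap2 imul (ieval iA iB x) (iinv j)
      | None => None
      end
  | XSq x => option_map isq (ieval iA iB x)
  end.

Lemma PI_bounds : 314 / 100 <= PI <= 315 / 100.
Proof.
  destruct (PI_2_3_7_ineq 1) as [H1 H2].
  unfold PI_2_3_7_tg, tg_alt, Ratan_seq in H1, H2.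
  cbn [sum_f_R0 Nat.mul Nat.add INR pow] in H1, H2.
  split; lra.
Qed.

Lemma PI_in_itv : in_itv PI pi_itv.
Proof. unfold in_itv, pi_itv, dy, scale; simpl; pose proof PI_bounds; lra. Qed.

Lemma omap2_correct (op : R -> R -> R) f x y oi oj k :
  (forall i j, in_itv x i -> in_itv y j -> in_itv (op x y) (f i j)) ->
  (forall i, oi = Some i -> in_itv x i) -> (forall j, oj = Some j -> in_itv y j) ->
  omap2 f oi oj = Some k -> in_itv (op x y) k.
Proof.
  intros Hf Hx Hy; destruct oi as [i|], oj as [j|]; try discriminate.
  intros E; injection E as <-; auto.
Qed.

Lemma ieval_correct A B iA iB : in_itv A iA -> in_itv B iB ->
  forall e i, ieval iA iB e = Some i -> in_itv (reval A B e) i.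
Proof.
  intros HA HB e; induction e; intros i E; simpl in E |- *.
  - injection E as <-; exact HA.
  - injection E as <-; exact HB.
  - injection E as <-; exact PI_in_itv.
  - injection E as <-; unfold in_itv; simpl; rewrite dy_const; lra.
  - exact (omap2_correct Rplus _ _ _ _ _ _ (@iadd_correct _ _) IHe1 IHe2 E).
  - exact (omap2_correct Rminus _ _ _ _ _ _ (@isub_correct _ _) IHe1 IHe2 E).
  - exact (omap2_correct Rmult _ _ _ _ _ _ (@imul_correct _ _) IHe1 IHe2 E).
  - destruct (ieval iA iB e2) as [j|] eqn:Ej; [|discriminate].
    destruct (iinv j) as [k|] eqn:Ek; [|destruct (ieval iA iB e1); discriminate].
    destruct (iinv_correct _ _ _ (IHe2 j eq_refl) Ek) as [_ Hk].
    refine (omap2_correct Rmult imul _ (/ reval A B e2) _ (Some k) i (@imul_correct _ _) IHe1 _ E).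
    intros j' Ej'; injection Ej' as <-; exact Hk.
  - destruct (ieval iA iB e) as [j|]; [|discriminate].
    injection E as <-; apply isq_correct, IHe; reflexivity.
Qed.

Definition sign_cond : Type := rexpr * bool.

Definition cond_holds (A B : R) (c : sign_cond) : Prop :=
  if snd c then 0 < reval A B (fst c) else 0 <= reval A B (fst c).

(* Written without trailing [True]/[False] so that they unfold to the goals they reify. *)
Fixpoint all_hold (A B : R) (l : list sign_cond) : Prop :=
  match l with
  | nil => True
  | c :: nil => cond_holds A B c
  | c :: r => cond_holds A B c /\ all_hold A B r
  end.

Fixpoint some_holds (A B : R) (s : list (list sign_cond)) : Prop :=
  match s with
  | nil => False
  | l :: nil => all_hold A B l
  | l :: r => all_hold A B l \/ some_holds A B r
  end.

Definition check_cond (iA iB : itv) (c : sign_cond) : bool :=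
  match ieval iA iB (fst c) with
  | Some i => if snd c then (0 <? fst i)%Z else (0 <=? fst i)%Z
  | None => false
  end.

Definition midpoint (i : itv) : Z := ((fst i + snd i) / 2)%Z.

(* [if] rather than [||]/[&&], which [vm_compute] would evaluate eagerly. *)
Fixpoint certify (s : list (list sign_cond)) (depth : nat) (iA iB : itv) : bool :=
  if existsb (forallb (check_cond iA iB)) s then true else
  match depth with
  | O => false
  | S n =>
    if (snd iB - fst iB <=? snd iA - fst iA)%Z
    then if certify s n (fst iA, midpoint iA) iB then certify s n (midpoint iA, snd iA) iB else false
    else if certify s n iA (fst iB, midpoint iB) then certify s n iA (midpoint iB, snd iB) else false
  end.

Lemma check_cond_sound A B iA iB c : in_itv A iA -> in_itv B iB ->
  check_cond iA iB c = true -> cond_holds A B c.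
Proof.
  intros HA HB; unfold check_cond, cond_holds.
  destruct (ieval iA iB (fst c)) as [i|] eqn:E; [|discriminate].
  destruct (ieval_correct A B iA iB HA HB _ _ E) as [Hlo _].
  destruct (snd c); intros H.
  - apply Z.ltb_lt, dy_lt in H; rewrite dy_0 in H; lra.
  - apply Z.leb_le, dy_le in H; rewrite dy_0 in H; lra.
Qed.

Lemma check_sound A B iA iB s : in_itv A iA -> in_itv B iB ->
  existsb (forallb (check_cond iA iB)) s = true -> some_holds A B s.
Proof.
  intros HA HB; induction s as [|l s IHs]; [discriminate|].
  cbn [existsb]; intros H; apply Bool.orb_true_iff in H.
  assert (Hl : forallb (check_cond iA iB) l = true -> all_hold A B l).
  { clear H IHs; induction l as [|c l IHl]; [intros; exact I|].
    cbn [forallb]; intros Hc; apply Bool.andb_true_iff in Hc as [Hc Hr].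
    pose proof (check_cond_sound A B iA iB c HA HB Hc).
    destruct l; [assumption | split; auto]. }
  destruct s as [|l' s]; destruct H as [H|H].
  - exact (Hl H).
  - discriminate.
  - left; exact (Hl H).
  - right; exact (IHs H).
Qed.

Lemma certify_sound s depth : forall iA iB A B, in_itv A iA -> in_itv B iB ->
  certify s depth iA iB = true -> some_holds A B s.
Proof.
  induction depth as [|n IH]; intros iA iB A B HA HB; simpl;
    destruct (existsb (forallb (check_cond iA iB)) s) eqn:E;
    try (intros _; exact (check_sound A B iA iB s HA HB E)); [discriminate|].
  destruct (snd iB - fst iB <=? snd iA - fst iA)%Z.
  - destruct (certify s n (fst iA, midpoint iA) iB) eqn:E1; [|discriminate]; intros E2.
    destruct (Rle_dec A (dy (midpoint iA))).
    + apply (IH (fst iA, midpoint iA) iB A B); [unfold in_itv in *; simpl; lra | exact HB | exact E1].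
    + apply (IH (midpoint iA, snd iA) iB A B); [unfold in_itv in *; simpl; lra | exact HB | exact E2].
  - destruct (certify s n iA (fst iB, midpoint iB)) eqn:E1; [|discriminate]; intros E2.
    destruct (Rle_dec B (dy (midpoint iB))).
    + apply (IH iA (fst iB, midpoint iB) A B); [exact HA | unfold in_itv in *; simpl; lra | exact E1].
    + apply (IH iA (midpoint iB, snd iB) A B); [exact HA | unfold in_itv in *; simpl; lra | exact E2].
Qed.

Definition unit_itv : itv := (0, scale)%Z.

Lemma certify_unit_square s depth A B : 0 <= A <= 1 -> 0 <= B <= 1 ->
  certify s depth unit_itv unit_itv = true -> some_holds A B s.
Proof.
  assert (H1 : dy scale = 1) by (unfold dy; field; generalize IZR_scale_pos; lra).
  intros HA HB; apply certify_sound; unfold in_itv, unit_itv; cbn [fst snd];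
    rewrite dy_0, H1; assumption.
Qed.

Ltac reify_rexpr A B t :=
  lazymatch t with
  | PI => constr:(XPi)
  | IZR ?z => constr:(XConst z)
  | ?x + ?y => let a := reify_rexpr A B x in let b := reify_rexpr A B y in constr:(XAdd a b)
  | ?x - ?y => let a := reify_rexpr A B x in let b := reify_rexpr A B y in constr:(XSub a b)
  | ?x * ?y => let a := reify_rexpr A B x in let b := reify_rexpr A B y in constr:(XMul a b)
  | ?x / ?y => let a := reify_rexpr A B x in let b := reify_rexpr A B y in constr:(XDiv a b)
  | ?x ^ 2 => let a := reify_rexpr A B x in constr:(XSq a)
  | _ => lazymatch constr:((t, A, B)) with
         | (?x, ?x, _) => constr:(XA)
         | (?x, _, ?x) => constr:(XB)
         end
  end.

Ltac reify_cond A B t :=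
  lazymatch t with
  | 0 < ?e => let x := reify_rexpr A B e in constr:((x, true))
  | 0 <= ?e => let x := reify_rexpr A B e in constr:((x, false))
  end.

Ltac reify_conj A B t :=
  lazymatch t with
  | ?p /\ ?q => let c := reify_cond A B p in let l := reify_conj A B q in constr:(c :: l)
  | _ => let c := reify_cond A B t in constr:(c :: nil)
  end.

Ltac reify_disj A B t :=
  lazymatch t with
  | ?p \/ ?q => let l := reify_conj A B p in let s := reify_disj A B q in constr:(l :: s)
  | _ => let l := reify_conj A B t in constr:(l :: nil)
  end.

Ltac prove_by_bisection A B depth :=
  lazymatch goal with
  | |- ?P =>
    let s := reify_disj A B P in
    change (some_holds A B s);
    apply (certify_unit_square s depth); [assumption | assumption | vm_compute; reflexivity]
  end.

(** * Certified inequalities on the unit square *)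

Definition slope (A B : R) : R := 2 * B - A * B * (A - B).

Definition excess (A B : R) : R :=
  8 - 4 * (A - B) ^ 2 * (1 + A * B / 2) - (3 + A * B) * (A + B).

(* [excess] vanishes at [A = B = 1], where no enclosure can certify its sign; the
   factors of [excess_split] (and of [sin_lower_split]) remove this degeneracy.  They keep
   [1 - A] and [1 - B] as subterms because interval enclosures depend on the syntax. *)
Definition excess_a (A B : R) : R :=
  6 - ((1 - A) + (1 - B)) - (1 - B) + (1 - A) * (1 - B)
  - 4 * ((1 - A) - (1 - B)) * (1 + A * B / 2).

Definition excess_b (A B : R) : R :=
  6 - ((1 - A) + (1 - B)) - (1 - A) + (1 - A) * (1 - B)
  - 4 * ((1 - B) - (1 - A)) * (1 + A * B / 2).

Lemma excess_split A B :
  excess A B = (1 - A) * excess_a A B + (1 - B) * excess_b A B.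
Proof. unfold excess, excess_a, excess_b; field. Qed.

Lemma excess_certificate A B : 0 <= A <= 1 -> 0 <= B <= 1 ->
  0 <= excess A B \/ (0 <= excess_a A B /\ 0 <= excess_b A B).
Proof. intros; unfold excess, excess_a, excess_b; prove_by_bisection A B 20%nat. Qed.

Definition vmax (A B : R) : R := excess A B / (4 * (A + B) * slope A B).

Definition sin_lower (A B : R) : R :=
  (A + B) * (PI * vmax A B) * (1 - (PI * vmax A B) ^ 2 / 6).

Definition qM (A B : R) : R := (2 + A * B - B ^ 2) ^ 2 / (4 * B ^ 2 * (A + B) ^ 2).
Definition qN (A B : R) : R := (2 + A * B - A ^ 2) ^ 2 / (4 * A ^ 2 * (A + B) ^ 2).

(* [(PI * Mmid A B) ^ 2] and [(PI * Nmid A B) ^ 2] without square roots (see [sqM_eq]). *)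
Definition sqM (A B : R) : R := PI ^ 2 * (1 - A ^ 2) * qM A B.
Definition sqN (A B : R) : R := PI ^ 2 * (1 - B ^ 2) * qN A B.

Definition cos_upper (A B : R) : R :=
  A * (1 - sqN A B / 2 + sqN A B ^ 2 / 24)
  - B * (1 - sqM A B / 2 + sqM A B ^ 2 / 24 - sqM A B * sqM A B ^ 2 / 720).

Definition half_gap (A B : R) : R :=
  4 + 4 * (A * B) + 4 * (A * B) ^ 2 + 2 * (A * B) * (A * B) ^ 2
  - (A ^ 2 + B ^ 2) * (2 + A * B) ^ 2.

Definition sin_lower_factor (A B : R) : R :=
  (1 - (PI * vmax A B) ^ 2 / 6) / (4 * slope A B).

Definition gap_a (A B : R) : R :=
  PI * excess_a A B * sin_lower_factor A B + 1
  - B * (PI ^ 2 * (1 + A) * qM A B) / 2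
  + B * (1 - A) * (PI ^ 2 * (1 + A) * qM A B) ^ 2 / 24
  - B * (1 - A) ^ 2 * (PI ^ 2 * (1 + A) * qM A B) * (PI ^ 2 * (1 + A) * qM A B) ^ 2 / 720.

Definition gap_b (A B : R) : R :=
  PI * excess_b A B * sin_lower_factor A B - 1
  + A * (PI ^ 2 * (1 + B) * qN A B) / 2
  - A * (1 - B) * (PI ^ 2 * (1 + B) * qN A B) ^ 2 / 24.

Lemma taylor_certificate A B : 0 <= A <= 1 -> 0 <= B <= 1 ->
  0 < half_gap A B \/ 0 <= 2 * excess A B - 4 * (A + B) * slope A B \/
  0 <= sin_lower A B - A \/ 0 <= sin_lower A B - cos_upper A B \/
  (0 <= gap_a A B /\ 0 <= gap_b A B).
Proof.
  intros; unfold half_gap, sin_lower, cos_upper, gap_a, gap_b, sin_lower_factor,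
    sqM, sqN, qM, qN, vmax, excess, excess_a, excess_b, slope.
  prove_by_bisection A B 30%nat.
Qed.

(** * Taylor bounds *)

Lemma sin_ge_cubic x : 0 <= x <= PI -> x - x ^ 3 / 6 <= sin x.
Proof.
  intros [H0 H1]; destruct (SIN x H0 H1) as [H _].
  unfold sin_lb, sin_approx, sin_term in H; cbn [sum_f_R0] in H.
  rewrite !INR_IZR_INZ in H; cbn in H.
  pose proof PI_4.
  assert (0 <= x ^ 5 * (42 - x ^ 2)) by (apply Rmult_le_pos; [apply pow_le; lra | nra]).
  nra.
Qed.

Lemma cos_taylor x : 0 <= x <= PI / 2 ->
  1 - x ^ 2 / 2 + (x ^ 2) ^ 2 / 24 - x ^ 2 * (x ^ 2) ^ 2 / 720 <= cos x <=
  1 - x ^ 2 / 2 + (x ^ 2) ^ 2 / 24.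
Proof.
  intros [H0 H1]; assert (H0' : - PI / 2 <= x) by (pose proof PI_RGT_0; lra).
  destruct (COS x H0' H1) as [Hl Hu].
  unfold cos_lb, cos_ub, cos_approx, cos_term in Hl, Hu.
  cbn [sum_f_R0 Nat.mul Nat.add] in Hl, Hu.
  assert (E8 : INR (fact 8) = 40320) by (rewrite INR_IZR_INZ; reflexivity).
  assert (E6 : INR (fact 6) = 720) by (rewrite INR_IZR_INZ; reflexivity).
  assert (E4 : INR (fact 4) = 24) by (rewrite INR_IZR_INZ; reflexivity).
  assert (E2 : INR (fact 2) = 2) by (rewrite INR_IZR_INZ; reflexivity).
  assert (E0 : INR (fact 0) = 1) by reflexivity.
  rewrite E8, E6, E4, E2, E0 in Hu; rewrite E6, E4, E2, E0 in Hl; cbn [pow] in Hl, Hu.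
  pose proof PI_4.
  assert (0 <= x ^ 6 * (56 - x ^ 2)) by (apply Rmult_le_pos; [apply pow_le; lra | nra]).
  split; nra.
Qed.

(** * The values of [M] and [N] at [U = 1/2] *)

Lemma le_of_sq_le x y : 0 <= y -> x ^ 2 <= y ^ 2 -> x <= y.
Proof. intros Hy H; destruct (Rle_dec x y) as [|Hn]; [assumption|]; nra. Qed.

Definition Mmid (A B : R) : R := kap A * (2 + A * B - B ^ 2) / (2 * B * (A + B)).
Definition Nmid (A B : R) : R := eps B * (2 + A * B - A ^ 2) / (2 * A * (A + B)).

Lemma kap_sq A : A ^ 2 <= 1 -> kap A ^ 2 = 1 - A ^ 2.
Proof. intros; unfold kap; apply pow2_sqrt; lra. Qed.

Lemma eps_sq B : B ^ 2 <= 1 -> eps B ^ 2 = 1 - B ^ 2.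
Proof. exact (kap_sq B). Qed.

Lemma Mmid_swap A B : Mmid B A = Nmid A B.
Proof. unfold Mmid, Nmid; rewrite (Rmult_comm B A), (Rplus_comm B A); reflexivity. Qed.

Lemma Nmid_swap A B : Nmid B A = Mmid A B.
Proof. rewrite <- Mmid_swap; reflexivity. Qed.

Lemma half_gap_swap A B : half_gap B A = half_gap A B.
Proof. unfold half_gap; ring. Qed.

Lemma excess_swap A B : excess B A = excess A B.
Proof. unfold excess; field. Qed.

Lemma half_gap_eq A B :
  half_gap A B = (1 - A ^ 2) * (2 + A * B - B ^ 2) ^ 2 - (B * (A + B)) ^ 2.
Proof. unfold half_gap; ring. Qed.

Lemma sqM_eq A B : 0 < A <= 1 -> 0 < B <= 1 -> (PI * Mmid A B) ^ 2 = sqM A B.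
Proof.
  intros; unfold Mmid, sqM, qM.
  replace ((PI * (kap A * (2 + A * B - B ^ 2) / (2 * B * (A + B)))) ^ 2)
    with (PI ^ 2 * kap A ^ 2 * (2 + A * B - B ^ 2) ^ 2 / (2 * B * (A + B)) ^ 2) by (field; lra).
  rewrite kap_sq by nra; field; lra.
Qed.

Lemma sqN_eq A B : 0 < A <= 1 -> 0 < B <= 1 -> (PI * Nmid A B) ^ 2 = sqN A B.
Proof.
  intros; rewrite <- Mmid_swap, sqM_eq by assumption.
  unfold sqM, sqN, qM, qN; rewrite (Rmult_comm B A), (Rplus_comm B A); reflexivity.
Qed.

(* [half_gap A B <= 0] says exactly [Mmid A B <= 1/2]. *)
Lemma Mmid_range A B : 0 < A <= 1 -> 0 < B <= 1 -> half_gap A B <= 0 -> 0 <= Mmid A B <= 1 / 2.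
Proof.
  intros HA HB Hg; rewrite half_gap_eq, <- kap_sq in Hg by nra.
  pose proof (sqrt_pos (1 - A ^ 2)) as Hk; fold (kap A) in Hk.
  set (x := kap A * (2 + A * B - B ^ 2)) in *.
  assert (Hx : 0 <= x) by (unfold x; apply Rmult_le_pos; nra).
  assert (Hxy : x <= B * (A + B)).
  { apply le_of_sq_le; [nra|]; unfold x; rewrite Rpow_mult_distr; lra. }
  unfold Mmid; fold x; split.
  - apply Rmult_le_pos; [lra | left; apply Rinv_0_lt_compat; nra].
  - apply Rmult_le_reg_r with (2 * B * (A + B)); [nra|].
    unfold Rdiv; rewrite Rmult_assoc, Rinv_l by nra; lra.
Qed.

Lemma Nmid_range A B : 0 < A <= 1 -> 0 < B <= 1 -> half_gap A B <= 0 -> 0 <= Nmid A B <= 1 / 2.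
Proof.
  intros HA HB Hg; rewrite <- Mmid_swap.
  apply Mmid_range; [exact HB | exact HA | rewrite half_gap_swap; exact Hg].
Qed.

(* [B0 A] is the positive root of [(1 + kap A) B^2 + A (1 - kap A) B - 2 kap A]. *)
Lemma half_gap_nonpos A B : 0 < A <= 1 -> 0 < B <= 1 -> B0 A <= B -> half_gap A B <= 0.
Proof.
  intros HA HB H; unfold B0 in H.
  pose proof (kap_sq A ltac:(nra)) as Hk2; pose proof (sqrt_pos (1 - A ^ 2)) as Hk0.
  fold (kap A) in Hk0; set (k := kap A) in *.
  set (D := A ^ 2 * (1 - k) ^ 2 + 8 * k * (1 + k)) in *.
  assert (HD : 0 <= D) by (unfold D; nra).
  pose proof (pow2_sqrt D HD) as Hs2; pose proof (sqrt_pos D) as Hs0; set (s := sqrt D) in *.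
  assert (Hs : s <= 2 * (1 + k) * B + A * (1 - k)).
  { apply Rmult_le_compat_r with (r := 2 * (1 + k)) in H; [|lra].
    unfold Rdiv in H; rewrite Rmult_assoc, Rinv_l in H by lra; lra. }
  assert (Hroot : 2 * k <= (1 + k) * B ^ 2 + A * B * (1 - k)).
  { assert (D <= (2 * (1 + k) * B + A * (1 - k)) ^ 2) by (rewrite <- Hs2; apply pow_incr; lra).
    unfold D in *; nra. }
  assert (Hlin : k * (2 + A * B - B ^ 2) <= B * (A + B)) by nra.
  rewrite half_gap_eq, <- Hk2, <- Rpow_mult_distr.
  assert (0 <= k * (2 + A * B - B ^ 2)) by (apply Rmult_le_pos; nra).
  assert ((k * (2 + A * B - B ^ 2)) ^ 2 <= (B * (A + B)) ^ 2) by (apply pow_incr; lra).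
  lra.
Qed.

Lemma slope_pos A B : 0 < A <= 1 -> 0 < B <= 1 -> 0 < slope A B.
Proof.
  intros; unfold slope.
  replace (2 * B - A * B * (A - B)) with (B * (2 - A * A + A * B)) by ring.
  apply Rmult_lt_0_compat; nra.
Qed.

Lemma excess_nonneg A B : 0 <= A <= 1 -> 0 <= B <= 1 -> 0 <= excess A B.
Proof.
  intros HA HB; destruct (excess_certificate A B HA HB) as [H | [Ha Hb]]; [exact H|].
  rewrite excess_split; apply Rplus_le_le_0_compat; apply Rmult_le_pos; lra.
Qed.

Lemma sin_lower_split A B : 0 < A <= 1 -> 0 < B <= 1 ->
  sin_lower A B - cos_upper A B = (1 - A) * gap_a A B + (1 - B) * gap_b A B.
Proof.
  intros; pose proof (slope_pos A B ltac:(lra) ltac:(lra)).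
  unfold sin_lower, cos_upper, gap_a, gap_b, sin_lower_factor, sqM, sqN, vmax.
  rewrite excess_split; field; repeat split; lra.
Qed.

Lemma sin_lower_dominates A B : 0 < A <= 1 -> 0 < B <= 1 -> half_gap A B <= 0 ->
  vmax A B < 1 / 2 -> A <= sin_lower A B \/ cos_upper A B <= sin_lower A B.
Proof.
  intros HA HB Hg Hv; pose proof (slope_pos A B HA HB) as Hs.
  destruct (taylor_certificate A B ltac:(lra) ltac:(lra)) as [H|[H|[H|[H|[Ha Hb]]]]].
  - lra.
  - exfalso; assert (vmax A B - 1 / 2 = (2 * excess A B - 4 * (A + B) * slope A B)
                                        / (8 * (A + B) * slope A B)) by (unfold vmax; field; lra).
    assert (0 <= (2 * excess A B - 4 * (A + B) * slope A B) / (8 * (A + B) * slope A B)).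
    { apply Rmult_le_pos; [lra | left; apply Rinv_0_lt_compat; nra]. }
    lra.
  - left; lra.
  - right; lra.
  - right; assert (0 <= (1 - A) * gap_a A B + (1 - B) * gap_b A B)
      by (apply Rplus_le_le_0_compat; apply Rmult_le_pos; lra).
    rewrite <- sin_lower_split in *; lra.
Qed.

Lemma cos_mid_combination_le A B : 0 < A <= 1 -> 0 < B <= 1 -> half_gap A B <= 0 ->
  A * cos (PI * Nmid A B) - B * cos (PI * Mmid A B) <= Rmin A (cos_upper A B).
Proof.
  intros HA HB Hg.
  pose proof (Mmid_range A B HA HB Hg); pose proof (Nmid_range A B HA HB Hg); pose proof PI_RGT_0.
  destruct (cos_taylor (PI * Mmid A B)) as [HM _]; [split; nra|].
  destruct (cos_taylor (PI * Nmid A B)) as [_ HN]; [split; nra|].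
  rewrite sqM_eq in HM by assumption; rewrite sqN_eq in HN by assumption.
  assert (0 <= cos (PI * Mmid A B)) by (apply cos_ge_0; nra).
  pose proof (COS_bound (PI * Nmid A B)).
  apply Rmin_glb; unfold cos_upper; nra.
Qed.

Lemma slope_mul_le A B v : 0 < A <= 1 -> 0 < B <= 1 -> half_gap A B <= 0 -> 0 <= v <= 1 / 2 ->
  (A + B) * sin (PI * v) <= A * cos (PI * Nmid A B) - B * cos (PI * Mmid A B) ->
  slope A B * v <= excess A B / (4 * (A + B)).
Proof.
  intros HA HB Hg Hv Hs.
  pose proof (slope_pos A B HA HB); pose proof (excess_nonneg A B ltac:(lra) ltac:(lra)).
  pose proof PI_RGT_0; pose proof PI_4.
  assert (Hw : slope A B * vmax A B = excess A B / (4 * (A + B))) by (unfold vmax; field; lra).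
  assert (Hw0 : 0 <= vmax A B).
  { unfold vmax; apply Rmult_le_pos; [lra | left; apply Rinv_0_lt_compat; nra]. }
  destruct (Rle_dec v (vmax A B)) as [Hle|Hgt]; [rewrite <- Hw; nra | exfalso].
  set (z := PI * vmax A B).
  assert (Hsz : sin z < sin (PI * v)) by (apply sin_increasing_1; unfold z; nra).
  assert (Hz : z - z ^ 3 / 6 <= sin z) by (apply sin_ge_cubic; unfold z; nra).
  assert (Hlow : sin_lower A B < (A + B) * sin (PI * v)).
  { replace (sin_lower A B) with ((A + B) * (z - z ^ 3 / 6)) by (unfold sin_lower; fold z; field).
    nra. }
  pose proof (cos_mid_combination_le A B HA HB Hg) as Hup.
  pose proof (Rmin_l A (cos_upper A B)); pose proof (Rmin_r A (cos_upper A B)).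
  destruct (sin_lower_dominates A B HA HB Hg ltac:(lra)); lra.
Qed.

Lemma slope_mul_le_of_balance A B v M N :
  0 < A <= 1 -> 0 < B <= 1 -> half_gap A B <= 0 -> 0 <= v <= 1 / 2 ->
  M = Mmid A B - kap A * v -> N = Nmid A B + eps B * v -> 0 <= M -> N <= 1 ->
  B * cos (PI * M) - A * cos (PI * N) + (A + B) * sin (PI * v) = 0 ->
  slope A B * v <= excess A B / (4 * (A + B)).
Proof.
  intros HA HB Hg Hv HM HN HM0 HN1 Hbal.
  pose proof (Mmid_range A B HA HB Hg); pose proof (Nmid_range A B HA HB Hg).
  pose proof (sqrt_pos (1 - A ^ 2)); pose proof (sqrt_pos (1 - B ^ 2)); pose proof PI_RGT_0.
  fold (kap A) (eps B) in *.
  assert (Hk : 0 <= kap A * v) by (apply Rmult_le_pos; lra).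
  assert (He : 0 <= eps B * v) by (apply Rmult_le_pos; lra).
  assert (cos (PI * N) <= cos (PI * Nmid A B))
    by (apply cos_decr_1; try apply Rmult_le_compat_l; nra).
  assert (cos (PI * Mmid A B) <= cos (PI * M))
    by (apply cos_decr_1; try apply Rmult_le_compat_l; nra).
  apply slope_mul_le; [exact HA | exact HB | exact Hg | exact Hv | nra].
Qed.

Lemma Mf_mid A B U : 0 < A <= 1 -> 0 < B <= 1 -> Mf A B U = Mmid A B - kap A * (U - 1 / 2).
Proof. intros; unfold Mf, Pf, Mmid; field; lra. Qed.

Lemma Nf_mid A B U : 0 < A <= 1 -> 0 < B <= 1 -> Nf A B U = Nmid A B + eps B * (U - 1 / 2).
Proof. intros; unfold Nf, Nmid; rewrite kap_sq by nra; field; lra. Qed.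

Lemma window_bounds A B U : 0 < A <= 1 -> 0 < B <= 1 -> Lf A B <= U <= Rf A B ->
  0 <= U <= 1 /\ 0 <= Mf A B U <= 1 /\ 0 <= Nf A B U <= 1.
Proof.
  intros HA HB [HL HR].
  pose proof (kap_sq A ltac:(nra)); pose proof (eps_sq B ltac:(nra)).
  pose proof (sqrt_pos (1 - A ^ 2)); pose proof (sqrt_pos (1 - B ^ 2)); fold (kap A) (eps B) in *.
  assert (HP : 1 <= Pf A B).
  { unfold Pf; apply Rmult_le_reg_r with (B * (A + B)); [nra|].
    unfold Rdiv; rewrite Rmult_assoc, Rinv_l by nra; nra. }
  assert (HU0 : 0 <= U).
  { eapply Rle_trans; [|exact HL]; unfold Lf.
    apply Rmult_le_pos; apply Rmult_le_pos; try apply Rlt_le, Rinv_0_lt_compat; nra. }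
  assert (HMU : Mf A B U <= U).
  { unfold Lf in HL; unfold Mf.
    replace (kap A / (1 + kap A) * ((1 + A * B) / (B * (A + B))))
      with (kap A * Pf A B / (1 + kap A)) in HL by (unfold Pf; field; nra).
    apply Rmult_le_compat_r with (r := 1 + kap A) in HL; [|lra].
    unfold Rdiv in HL; rewrite Rmult_assoc, Rinv_l in HL by lra; nra. }
  assert (HNU : Nf A B U <= 1 - U).
  { unfold Rf in HR; unfold Nf.
    apply Rmult_le_compat_r with (r := 1 + eps B) in HR; [|lra].
    unfold Rdiv in HR at 1; rewrite Rmult_assoc, Rinv_l in HR by lra; lra. }
  assert (HN0 : 0 <= Nf A B U).
  { unfold Nf; apply Rmult_le_pos; [lra|].
    assert (0 <= kap A ^ 2 / (A * (A + B))) by (apply Rmult_le_pos; [nra | left; apply Rinv_0_lt_compat; nra]).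
    lra. }
  assert (HM0 : 0 <= Mf A B U) by (unfold Mf; apply Rmult_le_pos; lra).
  repeat split; lra.
Qed.

Lemma cos_PI_as_sin U : cos (PI * U) = sin (PI * (1 / 2 - U)).
Proof. rewrite <- cos_shift; f_equal; field. Qed.

Lemma slope_bounds_of_root A B U : 0 < A <= 1 -> 0 < B <= 1 -> half_gap A B <= 0 ->
  G A B U = 0 -> Lf A B <= U <= Rf A B ->
  slope A B * (U - 1 / 2) <= excess A B / (4 * (A + B)) /\
  slope B A * (1 / 2 - U) <= excess A B / (4 * (A + B)).
Proof.
  intros HA HB Hg HG HW.
  destruct (window_bounds A B U HA HB HW) as (HU & HM & HN).
  pose proof (slope_pos A B HA HB); pose proof (slope_pos B A HB HA).
  assert (HE : 0 <= excess A B / (4 * (A + B))).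
  { apply Rmult_le_pos; [apply excess_nonneg; lra | left; apply Rinv_0_lt_compat; lra]. }
  unfold G in HG; rewrite (cos_PI_as_sin U) in HG.
  destruct (Rle_dec (1 / 2) U).
  - split; [|nra].
    apply (slope_mul_le_of_balance A B (U - 1 / 2) (Mf A B U) (Nf A B U));
      try solve [lra | apply Mf_mid, HB; exact HA | apply Nf_mid, HB; exact HA].
    replace (PI * (1 / 2 - U)) with (- (PI * (U - 1 / 2))) in HG by field.
    rewrite sin_neg in HG; lra.
  - split; [nra|].
    rewrite <- excess_swap, (Rplus_comm A B).
    apply (slope_mul_le_of_balance B A (1 / 2 - U) (Nf A B U) (Mf A B U));
      try solve [lra | rewrite half_gap_swap; exact Hg].
    + rewrite Mmid_swap, Nf_mid by assumption; change (kap B) with (eps B); ring.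
    + rewrite Nmid_swap, Mf_mid by assumption; change (eps A) with (kap A); ring.
Qed.

Lemma objective_low_eq A B U : 0 < A <= 1 -> 0 < B <= 1 ->
  (A + B) * (1 - U) + B * kap A * Mf A B U + A * eps B * Nf A B U
  = (3 + A * B) / 4 + excess A B / (4 * (A + B)) - slope A B * (U - 1 / 2).
Proof.
  intros; unfold Mf, Nf.
  replace (B * kap A * (kap A * (Pf A B - U))) with (B * kap A ^ 2 * (Pf A B - U)) by ring.
  replace (A * eps B * (eps B * (U + kap A ^ 2 / (A * (A + B)))))
    with (A * eps B ^ 2 * (U + kap A ^ 2 / (A * (A + B)))) by ring.
  rewrite kap_sq, eps_sq by nra; unfold Pf, excess, slope; field; lra.
Qed.

Lemma objective_high_eq A B U : 0 < A <= 1 -> 0 < B <= 1 ->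
  (A + B) * U + B * kap A * Mf A B U + A * eps B * Nf A B U
  = (3 + A * B) / 4 + excess A B / (4 * (A + B)) + slope B A * (U - 1 / 2).
Proof.
  intros; unfold Mf, Nf.
  replace (B * kap A * (kap A * (Pf A B - U))) with (B * kap A ^ 2 * (Pf A B - U)) by ring.
  replace (A * eps B * (eps B * (U + kap A ^ 2 / (A * (A + B)))))
    with (A * eps B ^ 2 * (U + kap A ^ 2 / (A * (A + B)))) by ring.
  rewrite kap_sq, eps_sq by nra; unfold Pf, excess, slope; field; lra.
Qed.

Lemma half_sqrt_le t : 0 <= 3 + t -> / 2 * sqrt (2 * (1 + t)) <= (3 + t) / 4.
Proof.
  intros Ht.
  assert (sqrt (2 * (1 + t)) <= (3 + t) / 2); [|lra].
  rewrite <- (sqrt_pow2 ((3 + t) / 2)) by lra; apply sqrt_le_1_alt.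
  assert (((3 + t) / 2) ^ 2 - 2 * (1 + t) = (1 - t) ^ 2 / 4) by field.
  pose proof (pow2_ge_0 (1 - t)); lra.
Qed.

Theorem mainTheorem9 (A B U : R) :
  0 < A <= 1 -> 0 < B <= 1 -> B0 A <= B ->
  G A B U = 0 -> Lf A B <= U <= Rf A B ->
  (A + B) * (1 - U) + B * kap A * Mf A B U + A * eps B * Nf A B U
    >= / 2 * sqrt (2 * (1 + A * B)) /\
  (A + B) * U + B * kap A * Mf A B U + A * eps B * Nf A B U
    >= / 2 * sqrt (2 * (1 + A * B)).
Proof.
  intros HA HB HB0 HG HW.
  pose proof (half_gap_nonpos A B HA HB HB0) as Hg.
  destruct (slope_bounds_of_root A B U HA HB Hg HG HW) as [Hlow Hhigh].
  pose proof (half_sqrt_le (A * B) ltac:(nra)).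
  rewrite objective_low_eq, objective_high_eq by assumption.
  split; lra.
Qed.
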